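(* Let $p$ be a positive multiple of $4$ and let $q \ge 8$ be a power of two. Let $k = pq/2$. Then there exists a perfect coloring of the $p \times q$ toroidal grid with the color set $\{0,1,\ldots,k-1\}$, i.e. a coloring in which every color appears exactly twice and, for every color $c$, the $8$ neighbors of $c$ (four neighbors at each of its two occurrences) are pairwise distinct colors.
   Context: Rows of the $p\times q$ grid are indexed $0,\ldots,p-1$ and columns $0,\ldots,q-1$. The grid is treated as toroidal: the north, south, west and east neighbors of position $(x,y)$ are the positions $(x-1 \bmod p, y)$, $(x+1 \bmod p, y)$, $(x, y-1 \bmod q)$, $(x, y+1 \bmod q)$. A coloring assigns a color to each grid position. If every color appears exactly $f$ times, then each color $c$ has $4f$ neighbors in total, namely the colors at the four neighboring positions of each of the $f$ positions colored $c$ (counted as a list of $4f$ entries). The coloring is called perfect if every color appears the same number $f$ of times and, for every color $c$, these $4f$ neighbor colors are pairwise distinct. *)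

From mathcomp Require Import all_boot.
Set Implicit Arguments. Unset Strict Implicit. Unset Printing Implicit Defensive.

(* Toroidal p x q grid; positions (x,y) with x : 'I_p (row), y : 'I_q (column). *)

Definition coloring (p q k : nat) := 'I_p -> 'I_q -> 'I_k.

Definition nbr_colors p q k (col : coloring p q k) (x : 'I_p) (y : 'I_q)
  : seq 'I_k :=
  [:: col (ord_pred x) y; col (ordS x) y; col x (ord_pred y); col x (ordS y)].

Definition occ p q k (col : coloring p q k) (c : 'I_k) : nat :=
  #|[set xy : 'I_p * 'I_q | col xy.1 xy.2 == c]|.

Definition nbr_list p q k (col : coloring p q k) (c : 'I_k) : seq 'I_k :=
  flatten [seq nbr_colors col xy.1 xy.2 |
             xy <- enum [set xy : 'I_p * 'I_q | col xy.1 xy.2 == c]].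

Definition perfect_with p q k (f : nat) (col : coloring p q k) : Prop :=
  (forall c : 'I_k, occ col c = f) /\ (forall c : 'I_k, uniq (nbr_list col c)).

Definition perfect p q k (col : coloring p q k) : Prop :=
  exists f, perfect_with f col.

From mathcomp Require Import all_boot zify.
Set Implicit Arguments. Unset Strict Implicit. Unset Printing Implicit Defensive.

(* Everything rests on one explicit 4 x 8 tile, i.e. a colouring
   of the 4 x 8 torus with 16 colours in which every colour occurs exactly
   twice and the eight neighbours of every colour are distinct; its
   properties are checked by computation over the finitely many cells.
   When 4 | p and 8 | q, the p x q torus is cut into (p/4)(q/8) blocks, the
   tile is copied into every block, and the colours of the block with index
   B are shifted by 16 B.  Because the grid dimensions are multiples of the
   tile dimensions, a neighbour of a cell has, modulo 16, the colour of the
   corresponding neighbour in the tile torus; hence the colour class of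
   c = 16 B + s is the pair of copies in block B of the two cells of colour s,
   and its eight neighbours are distinct already modulo 16.  This uses
   exactly pq/2 colours. *)

Lemma all_iotaP (P : pred nat) n : all P (iota 0 n) -> forall i, i < n -> P i.
Proof. by move=> /allP hP i hi; apply: hP; rewrite mem_iota. Qed.

Definition tile_rows : seq (seq nat) :=
  [:: [:: 0;1;2;0;3;1;4;5]; [:: 4;6;5;7;2;8;3;9];
      [:: 7;8;10;6;9;11;12;13]; [:: 12;14;11;15;14;13;10;15]].

Definition tile (u v : nat) : nat := nth 0 (nth [::] tile_rows u) v.

Definition tile_pos1 (s : nat) : nat * nat :=
  nth (0, 0) [:: (0,0); (0,1); (0,2); (0,4); (0,6); (0,7); (1,1); (1,3);
                 (1,5); (1,7); (2,2); (2,5); (2,6); (2,7); (3,1); (3,3)] s.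
Definition tile_pos2 (s : nat) : nat * nat :=
  nth (0, 0) [:: (0,3); (0,5); (1,4); (1,6); (1,0); (1,2); (2,3); (2,0);
                 (2,1); (2,4); (3,6); (3,2); (3,0); (3,5); (3,4); (3,7)] s.

Definition tile_nbrs (uv : nat * nat) : seq nat :=
  let: (u, v) := uv in
  [:: tile ((u + 3) %% 4) v; tile (u.+1 %% 4) v;
      tile u ((v + 7) %% 8); tile u (v.+1 %% 8)].

Definition in_tile (uv : nat * nat) : bool := (uv.1 < 4) && (uv.2 < 8).

Lemma tile_lt u v : u < 4 -> v < 8 -> tile u v < 16.
Proof.
move=> hu hv; have /all_iotaP/(_ u hu) : all (fun u =>
  all (fun v => tile u v < 16) (iota 0 8)) (iota 0 4) by [].
by move/all_iotaP/(_ v hv).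
Qed.

Lemma tile_posP s : s < 16 ->
  [/\ in_tile (tile_pos1 s), in_tile (tile_pos2 s), tile_pos1 s != tile_pos2 s,
      tile (tile_pos1 s).1 (tile_pos1 s).2 = s &
      tile (tile_pos2 s).1 (tile_pos2 s).2 = s].
Proof.
move=> hs; have /all_iotaP/(_ s hs) : all (fun s =>
  [&& in_tile (tile_pos1 s), in_tile (tile_pos2 s), tile_pos1 s != tile_pos2 s,
      tile (tile_pos1 s).1 (tile_pos1 s).2 == s &
      tile (tile_pos2 s).1 (tile_pos2 s).2 == s]) (iota 0 16) by [].
by case/and5P=> -> -> -> /eqP -> /eqP ->.
Qed.

Lemma tile_pos_complete u v : u < 4 -> v < 8 ->
  (u, v) = tile_pos1 (tile u v) \/ (u, v) = tile_pos2 (tile u v).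
Proof.
move=> hu hv; have /all_iotaP/(_ u hu)/all_iotaP/(_ v hv) : all (fun u =>
  all (fun v => ((u, v) == tile_pos1 (tile u v)) ||
                ((u, v) == tile_pos2 (tile u v))) (iota 0 8)) (iota 0 4) by [].
by case/orP=> /eqP; tauto.
Qed.

Lemma tile_nbrs_uniq s : s < 16 ->
  uniq (tile_nbrs (tile_pos1 s) ++ tile_nbrs (tile_pos2 s)).
Proof.
by apply: (@all_iotaP (fun s =>
  uniq (tile_nbrs (tile_pos1 s) ++ tile_nbrs (tile_pos2 s)))).
Qed.

(* On the n-cycle, taking a neighbour commutes with reduction modulo any
   divisor d of n; this is why the tile torus sees the right neighbours. *)
Lemma ord_pred_mod n d (x : 'I_n) : d %| n ->
  ord_pred x %% d = (x %% d + d.-1) %% d.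
Proof.
case: x => x xn dn; rewrite /= (modn_dvdm _ dn) modnDml.
case/dvdnP: dn xn => -[|m] -> //; case: d => [|d]; first by rewrite muln0.
have -> : (x + m.+1 * d.+1).-1 = m * d.+1 + (x + d) by rewrite mulSn; lia.
by rewrite modnMDl.
Qed.

Lemma ordS_mod n d (x : 'I_n) : d %| n -> ordS x %% d = (x %% d).+1 %% d.
Proof. by move=> dn; rewrite /= (modn_dvdm _ dn) -[in RHS]addn1 modnDml addn1. Qed.

Lemma perfect_with2 p q k (col : coloring p q k) :
  (forall c, exists P1 P2 : 'I_p * 'I_q,
     [/\ P1 != P2, [set xy | col xy.1 xy.2 == c] = [set P1; P2] &
         uniq (nbr_colors col P1.1 P1.2 ++ nbr_colors col P2.1 P2.2)]) ->
  perfect_with 2 col.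
Proof.
move=> hclass; split=> c; have [P1 [P2 [hne hset huniq]]] := hclass c.
  by rewrite /occ hset cards2 hne.
have pe : perm_eq (enum [set P1; P2]) [:: P1; P2].
  apply: uniq_perm; first exact: enum_uniq; first by rewrite /= inE hne.
  by move=> z; rewrite mem_enum !inE.
by rewrite /nbr_list hset (perm_uniq (perm_flatten (perm_map _ pe))).
Qed.

Section BlockColoring.

(* The grid has a x b blocks, each a copy of the tile. *)
Variables a b : nat.

Definition block_color (x y : nat) : nat :=
  tile (x %% 4) (y %% 8) + 16 * (x %/ 4 * b + y %/ 8).

Lemma block_color_mod x y : block_color x y %% 16 = tile (x %% 4) (y %% 8).
Proof.
have := tile_lt (ltn_pmod x (isT : 0 < 4)) (ltn_pmod y (isT : 0 < 8)).
rewrite /block_color; lia.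
Qed.

Lemma block_color_div x y : block_color x y %/ 16 = x %/ 4 * b + y %/ 8.
Proof.
have := tile_lt (ltn_pmod x (isT : 0 < 4)) (ltn_pmod y (isT : 0 < 8)).
rewrite /block_color; lia.
Qed.

Lemma block_color_lt (x : 'I_(4 * a)) (y : 'I_(8 * b)) :
  block_color x y < 16 * a * b.
Proof.
have ia : x %/ 4 < a by have := ltn_ord x; lia.
have jb : y %/ 8 < b by have := ltn_ord y; lia.
have blk : x %/ 4 * b + y %/ 8 < a * b.
  apply: (@leq_trans (x %/ 4 * b + b)); first by rewrite ltn_add2l.
  by rewrite -mulSnr leq_mul2r ia orbT.
have := tile_lt (ltn_pmod x (isT : 0 < 4)) (ltn_pmod y (isT : 0 < 8)).
rewrite /block_color; lia.
Qed.

Definition block_coloring : coloring (4 * a) (8 * b) (16 * a * b) :=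
  fun x y => Ordinal (block_color_lt x y).

Lemma block_nbrs_mod (x : 'I_(4 * a)) (y : 'I_(8 * b)) :
  map (fun c : 'I_(16 * a * b) => val c %% 16) (nbr_colors block_coloring x y)
  = tile_nbrs (x %% 4, y %% 8).
Proof.
rewrite /nbr_colors /= !block_color_mod.
by rewrite !ord_pred_mod ?ordS_mod ?dvdn_mulr.
Qed.

Definition block_cell (i j : nat) (uv : nat * nat) : nat * nat :=
  (i * 4 + uv.1, j * 8 + uv.2).

Lemma block_color_cell i j u v : j < b -> u < 4 -> v < 8 ->
  block_color (i * 4 + u) (j * 8 + v) = tile u v + 16 * (i * b + j).
Proof.
move=> jb u4 v8; rewrite /block_color !modnMDl (modn_small u4) (modn_small v8).
by rewrite !divnMDl // (divn_small u4) (divn_small v8) !addn0.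
Qed.

Lemma block_color_classP x y i j s : y < 8 * b -> j < b -> s < 16 ->
  block_color x y = s + 16 * (i * b + j) <->
  (x, y) = block_cell i j (tile_pos1 s) \/ (x, y) = block_cell i j (tile_pos2 s).
Proof.
move=> yb jb s16; have [in1 in2 _ hs1 hs2] := tile_posP s16.
split=> [hc | ].
  have hs : tile (x %% 4) (y %% 8) = s.
    by rewrite -block_color_mod hc addnC [16 * _]mulnC modnMDl modn_small.
  have hblk : x %/ 4 * b + y %/ 8 = i * b + j.
    by rewrite -block_color_div hc addnC [16 * _]mulnC divnMDl // divn_small // addn0.
  have yblk : y %/ 8 < b by lia.
  have hj : y %/ 8 = j.
    by have := congr1 (modn^~ b) hblk; rewrite /= !modnMDl !modn_small.
  have hi : x %/ 4 = i.
    have b0 : 0 < b by apply: leq_ltn_trans jb.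
    by apply/eqP; rewrite -(eqn_pmul2r b0) -(eqn_add2r j) -{1}hj hblk.
  have cell : (x, y) = block_cell i j (x %% 4, y %% 8).
    by rewrite /block_cell /= -hi -hj -!divn_eq.
  by case: (tile_pos_complete (ltn_pmod x (isT : 0 < 4)) (ltn_pmod y (isT : 0 < 8)));
    rewrite hs => <-; [left | right].
case=> -[-> ->].
  by case/andP: in1 => u4 v8; rewrite block_color_cell // hs1.
by case/andP: in2 => u4 v8; rewrite block_color_cell // hs2.
Qed.

(* Hence the colour class of any colour c consists of two distinct cells whose
   neighbour lists are jointly duplicate-free, being so modulo 16. *)
Lemma block_class (c : 'I_(16 * a * b)) :
  exists P1 P2 : 'I_(4 * a) * 'I_(8 * b),
    [/\ P1 != P2, [set xy | block_coloring xy.1 xy.2 == c] = [set P1; P2] &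
        uniq (nbr_colors block_coloring P1.1 P1.2 ++
              nbr_colors block_coloring P2.1 P2.2)].
Proof.
have [s [i [j [s16 jb ia hc]]]] : exists s i j,
    [/\ s < 16, j < b, i < a & val c = s + 16 * (i * b + j)].
  have blk : c %/ 16 < a * b by rewrite ltn_divLR // [a * b * 16]mulnC mulnA.
  have b0 : 0 < b by move: (leq_ltn_trans (leq0n _) blk); rewrite muln_gt0 => /andP[].
  exists (c %% 16), (c %/ 16 %/ b), (c %/ 16 %% b).
  split; rewrite ?ltn_mod //; first by rewrite ltn_divLR // mulnC.
  by rewrite -divn_eq addnC [16 * (c %/ 16)]mulnC -divn_eq.
have [in1 in2 hne hs1 hs2] := tile_posP s16.
move: in1 in2 hne hs1 hs2 (fun x y yb => @block_color_classP x y i j s yb jb s16).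
rewrite /block_cell; case e1 : (tile_pos1 s) => [u1 v1]; case e2 : (tile_pos2 s) => [u2 v2].
move=> /andP[/= u1l v1l] /andP[/= u2l v2l] hne hs1 hs2 classP.
have X1 : i * 4 + u1 < 4 * a by lia.
have X2 : i * 4 + u2 < 4 * a by lia.
have Y1 : j * 8 + v1 < 8 * b by lia.
have Y2 : j * 8 + v2 < 8 * b by lia.
have nbrs_uniq : uniq (nbr_colors block_coloring (Ordinal X1) (Ordinal Y1) ++
                       nbr_colors block_coloring (Ordinal X2) (Ordinal Y2)).
  apply: (@map_uniq _ _ (fun c : 'I_(16 * a * b) => val c %% 16)).
  rewrite map_cat !block_nbrs_mod !modnMDl (modn_small u1l) (modn_small u2l).
  rewrite (modn_small v1l) (modn_small v2l).
  by move: (tile_nbrs_uniq s16); rewrite e1 e2.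
exists (Ordinal X1, Ordinal Y1), (Ordinal X2, Ordinal Y2); split=> //.
  by move: hne; rewrite !xpair_eqE -!val_eqE /=; lia.
apply/setP=> -[x y]; rewrite !inE -val_eqE /= hc !xpair_eqE -!val_eqE /=.
apply/eqP/idP => [/(classP x y (ltn_ord y)) | hxy].
  by case=> -[-> ->]; rewrite !eqxx ?orbT.
apply/(classP x y (ltn_ord y)).
by case/orP: hxy => /andP[/eqP <- /eqP <-]; [left | right].
Qed.

Lemma block_coloring_perfect : perfect_with 2 block_coloring.
Proof. exact: perfect_with2 block_class. Qed.

End BlockColoring.

Lemma dvd8_pow2 e : 8 <= 2 ^ e -> 8 %| 2 ^ e.
Proof.
case: e => [|[|[|e]]] // _.
by rewrite (expnD 2 3 e) dvdn_mulr.
Qed.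

Theorem lemma1 (p q : nat) :
  0 < p -> 4 %| p -> 8 <= q -> (exists e, q = 2 ^ e) ->
  exists col : coloring p q (p * q %/ 2), perfect col /\ perfect_with 2 col.
Proof.
move=> _ /dvdnP[a ->] q8 [e he].
have /dvdnP[b hb] : 8 %| q by rewrite he dvd8_pow2 // -he.
rewrite hb (mulnC a) (mulnC b).
have -> : 4 * a * (8 * b) %/ 2 = 16 * a * b by lia.
have hperf := @block_coloring_perfect a b.
by exists (@block_coloring a b); split=> //; exists 2.
Qed.
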